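(* In the setting below, suppose that $x\mapsto f(x)+g(Ax)$ is bounded below and $\{x: x\in\operatorname{ri}(\operatorname{dom}f),\ Ax\in\operatorname{ri}(\operatorname{dom}g),\ Bx\le b\}\ne\emptyset$ (''$\operatorname{ri}$'' omitted for polyhedral $f$ or $g$). Let $w^*=[y^*;z^*]$ be a local minimizer of $G_+^\mu(w)=\Xi(w)+\Psi_{+,\mu}(z)$ (for some $\mu>0$), let $T_*=\{i:z^*_i\ne0\}$, $\bar T_*=[r]\setminus T_*$, let $$\Omega_+:=\operatorname{argmin}_{w=[y;z]}\{\Xi(w):\ z_{\bar T_*}=0,\ z_{T_*}\ge0\},$$ and assume $w^*\in\operatorname{argmin}\{\|z\|_0:\ w=[y;z]\in\Omega_+\}$. Define $\eta_0:=\min_w\{\Xi(w): z_{\bar T_*}=0,\ z_{T_*}\ge0\}$, $\eta_1:=\min_{S\subsetneq T_*}\min_w\{\Xi(w): z_{\bar S}=0,\ z_S\ge0\}$, $\eta_2:=\min_{S\not\subseteq T_*}\min_w\{\Xi(w): z_{\bar S}=0,\ z_S\ge0\}$ (a minimum over an empty family of index sets being $+\infty$). If $\mu'\in\mathbb R^r$, $\mu'>0$, satisfies $\sum_{i\in T_*}\mu'_i\le\eta_1-\eta_0$ and $\mu'_j>\max\{\eta_1-\eta_2,0\}$ for all $j\in\bar T_*$, then $w^*$ is a global minimizer of $\Xi(w)+\Psi_{+,\mu'}(z)$.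
   Context: Let $f:\mathbb R^n\to(-\infty,\infty]$, $g:\mathbb R^m\to(-\infty,\infty]$ be proper, lsc and convex with conjugates $f^*,g^*$; $A\in\mathbb R^{m\times n}$, $B\in\mathbb R^{r\times n}$, $b\in\mathbb R^r$. For $w=[y;z]\in\mathbb R^m\times\mathbb R^r$, $\Xi(w)=f^*(-A^\top y-B^\top z)+g^*(y)+\langle b,z\rangle$; $\Psi_{+,\mu}(z)=\sum_{i=1}^r\mu_i\mathbf 1_{\{z_i\ne0\}}+\delta(z\mid\mathbb R^r_+)$. $\|z\|_0$ is the number of nonzero entries of $z$; $[r]=\{1,\dots,r\}$, $\bar S=[r]\setminus S$, $z_S$ the subvector indexed by $S$. $\operatorname{ri}$ denotes relative interior. *)

From HB Require Import structures.
From mathcomp Require Import all_boot all_order all_algebra.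
From mathcomp Require Import all_classical all_reals ereal.
Set Implicit Arguments. Unset Strict Implicit. Unset Printing Implicit Defensive.
Import Order.TTheory GRing.Theory Num.Theory.
Local Open Scope classical_set_scope.
Local Open Scope ring_scope.

Section Defs.
Variable R : realType.

Definition dotv (n : nat) (u v : 'cV[R]_n) : R := \sum_(i < n) u i 0 * v i 0.

(* sup-norm open ball (equivalent to Euclidean ball for all purposes here) *)
Definition near_vec (n : nat) (x y : 'cV[R]_n) (e : R) : Prop :=
  forall i, `|y i 0 - x i 0| < e.

Definition edom (n : nat) (f : 'cV[R]_n -> \bar R) : set 'cV[R]_n :=
  [set x | (f x < +oo)%E].

Definition proper_fun (n : nat) (f : 'cV[R]_n -> \bar R) : Prop :=
  (exists x, (f x < +oo)%E) /\ (forall x, f x != -oo%E).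

Definition lsc_fun (n : nat) (f : 'cV[R]_n -> \bar R) : Prop :=
  forall x (t : R), (t%:E < f x)%E ->
    exists2 e : R, 0 < e & forall y, near_vec x y e -> (t%:E < f y)%E.

Definition convex_fun (n : nat) (f : 'cV[R]_n -> \bar R) : Prop :=
  forall (x y : 'cV[R]_n) (t : R), 0 < t -> t < 1 ->
    (f (t *: x + (1 - t) *: y)%R <= t%:E * f x + (1 - t)%:E * f y)%E.

Definition conj_fun (n : nat) (f : 'cV[R]_n -> \bar R) (u : 'cV[R]_n) : \bar R :=
  ereal_sup [set ((dotv u x)%:E - f x)%E | x in [set: 'cV[R]_n]].

Definition aff_hull (n : nat) (C : set 'cV[R]_n) : set 'cV[R]_n :=
  [set y | exists (k : nat) (p : 'I_k -> 'cV[R]_n) (l : 'I_k -> R),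
     [/\ forall i, C (p i), \sum_(i < k) l i = 1 & y = \sum_(i < k) l i *: p i]].

Definition rel_int (n : nat) (C : set 'cV[R]_n) : set 'cV[R]_n :=
  [set x | C x /\ exists2 e : R, 0 < e &
     forall y, near_vec x y e -> aff_hull C y -> C y].

(* polyhedral convex function: its epigraph is a finite intersection of
   closed half-spaces of R^n x R (Rockafellar, Sec. 19) *)
Definition polyhedral_fun (n : nat) (f : 'cV[R]_n -> \bar R) : Prop :=
  exists (k : nat) (a : 'I_k -> 'cV[R]_n) (be al : 'I_k -> R),
    forall (x : 'cV[R]_n) (t : R),
      (f x <= t%:E)%E <-> (forall i, dotv (a i) x + be i * t <= al i).

Definition Xi (n m r : nat) (f : 'cV[R]_n -> \bar R) (g : 'cV[R]_m -> \bar R)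
  (A : 'M[R]_(m, n)) (B : 'M[R]_(r, n)) (b : 'cV[R]_r)
  (y : 'cV[R]_m) (z : 'cV[R]_r) : \bar R :=
  (conj_fun f (- (A^T *m y) - B^T *m z)%R + conj_fun g y + (dotv b z)%:E)%E.

Definition Psi_plus (r : nat) (mu : 'cV[R]_r) (z : 'cV[R]_r) : \bar R :=
  ((\sum_(i < r) (if z i 0 != 0 then mu i 0 else 0))%R%:E
   + (if [forall i, (0 <= z i 0)%R] then 0 else +oo))%E.

Definition l0norm (r : nat) (z : 'cV[R]_r) : nat := #|[set i | z i 0 != 0]|.

Definition supp (r : nat) (z : 'cV[R]_r) : {set 'I_r} := [set i | z i 0 != 0].

Definition feasS (r : nat) (S : {set 'I_r}) (z : 'cV[R]_r) : Prop :=
  forall i, (i \notin S -> z i 0 = 0) /\ (i \in S -> 0 <= z i 0).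

Definition valS (n m r : nat) (f : 'cV[R]_n -> \bar R) (g : 'cV[R]_m -> \bar R)
  (A : 'M[R]_(m, n)) (B : 'M[R]_(r, n)) (b : 'cV[R]_r) (S : {set 'I_r}) : \bar R :=
  ereal_inf [set Xi f g A B b w.1 w.2 | w in [set w : 'cV[R]_m * 'cV[R]_r | feasS S w.2]].

End Defs.

From HB Require Import structures.
From mathcomp Require Import all_boot all_order all_algebra.
From mathcomp Require Import all_classical all_reals ereal.
Set Implicit Arguments. Unset Strict Implicit. Unset Printing Implicit Defensive.
Import Order.TTheory GRing.Theory Num.Theory.
Local Open Scope classical_set_scope.
Local Open Scope ring_scope.

(* w* minimizes Xi on the face {z_{~T} = 0, z_T >= 0} of its own support T, so its
   objective value is eta0 + sum_{i in T} mu'_i.  Any w = [y; z] with z >= 0 lies on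
   the face of S = supp z and so costs at least valS S + sum_{i in S} mu'_i.  This
   dominates eta0 + sum_T mu': trivially if S = T, through eta1 >= eta0 + sum_T mu'
   if S is a proper subset of T, and, if S is not inside T, because a single index
   j in S \ T already pays mu'_j > eta1 - eta2. *)

(* Both hold for all extended [a], [c] because [-oo + +oo = -oo]. *)
Lemma lee_subr_add (R : realDomainType) (a c : \bar R) (s : R) :
  (s%:E <= a - c)%E -> (c + s%:E <= a)%E.
Proof.
case: c => [c| |]; first by rewrite leeBrDr // addeC.
- by case: a.
- by rewrite leNye.
Qed.

Lemma lte_subl_le_add (R : realDomainType) (a c : \bar R) (s : R) :
  (a - c < s%:E)%E -> (a <= c + s%:E)%E.
Proof.
case: c => [c| |]; first by rewrite lteBlDr // addeC => /ltW.
- by rewrite leey.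
- by case: a.
Qed.

Lemma conj_fun_gtNy (R : realType) n (f : 'cV[R]_n -> \bar R) u :
  proper_fun f -> (-oo < conj_fun f u)%E.
Proof.
case=> [[x fx] fNy].
have : ((dotv u x)%:E - f x <= conj_fun f u)%E.
  by apply: ereal_sup_ubound; exists x.
move: fx (fNy x); case: (f x) => [v| |] //= _ _.
by apply: lt_le_trans; rewrite ltNyr.
Qed.

Lemma Psi_plus_nonneg (R : realType) r (mu z : 'cV[R]_r) :
  [forall i, 0 <= z i 0] -> Psi_plus mu z = (\sum_(i in supp z) mu i 0)%:E.
Proof.
move=> z_ge0; rewrite /Psi_plus z_ge0 adde0; congr (_%:E).
by rewrite [RHS]big_mkcond; apply: eq_bigr => i _; rewrite inE.
Qed.

Lemma Psi_plus_not_nonneg (R : realType) r (mu z : 'cV[R]_r) :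
  ~~ [forall i, 0 <= z i 0] -> Psi_plus mu z = +oo%E.
Proof. by move/negbTE=> z_ge0F; rewrite /Psi_plus z_ge0F addey. Qed.

Lemma feasS_supp (R : realType) r (z : 'cV[R]_r) :
  [forall i, 0 <= z i 0] -> feasS (supp z) z.
Proof. by move=> /forallP z_ge0 i; rewrite inE negbK; split=> // /eqP. Qed.

Lemma feasS_nonneg (R : realType) r (S : {set 'I_r}) (z : 'cV[R]_r) :
  feasS S z -> [forall i, 0 <= z i 0].
Proof.
move=> zS; apply/forallP => i; have [zSC zSS] := zS i.
by case: (boolP (i \in S)) => iS; [exact: zSS | rewrite zSC].
Qed.

Section FaceValues.
Variables (R : realType) (n m r : nat).
Variables (f : 'cV[R]_n -> \bar R) (g : 'cV[R]_m -> \bar R).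
Variables (A : 'M[R]_(m, n)) (B : 'M[R]_(r, n)) (b : 'cV[R]_r).
Hypotheses (f_proper : proper_fun f) (g_proper : proper_fun g).

Local Notation Xi := (Xi f g A B b).
Local Notation valS := (valS f g A B b).

Lemma Xi_gtNy y z : (-oo < Xi y z)%E.
Proof.
rewrite /Xi.
move: (conj_fun_gtNy (- (A^T *m y) - B^T *m z) f_proper).
move: (conj_fun_gtNy y g_proper).
case: (conj_fun g y) => [u| |] //; case: (conj_fun f _) => [v| |] // _ _.
by rewrite -!EFinD ltNyr.
Qed.

Lemma valS_le_Xi S y z : feasS S z -> (valS S <= Xi y z)%E.
Proof. by move=> zS; apply: ereal_inf_lbound; exists (y, z). Qed.

Lemma Xi_argmin_valS S y z :
  feasS S z -> (forall y' z', feasS S z' -> (Xi y z <= Xi y' z')%E) ->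
  Xi y z = valS S.
Proof.
move=> zS zmin; apply/le_anti/andP; split; last exact: valS_le_Xi.
by apply: le_ereal_inf_tmp => _ [w wS <-]; exact: zmin.
Qed.

Variables (T : {set 'I_r}) (mu : 'cV[R]_r) (eta1 eta2 : \bar R).
Hypotheses (mu_ge0 : forall i, 0 <= mu i 0)
  (eta1_lb : forall S : {set 'I_r}, S \proper T -> (eta1 <= valS S)%E)
  (eta2_lb : forall S : {set 'I_r}, ~~ (S \subset T) -> (eta2 <= valS S)%E)
  (sum_mu_T : ((\sum_(i in T) mu i 0)%:E <= eta1 - valS T)%E)
  (mu_notT : forall j, j \notin T -> (maxe (eta1 - eta2) 0 < (mu j 0)%:E)%E).

Lemma valS_add_sum_le (S : {set 'I_r}) :
  (valS T + (\sum_(i in T) mu i 0)%:E <= valS S + (\sum_(i in S) mu i 0)%:E)%E.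
Proof.
have sumS_ge0 : (0 <= (\sum_(i in S) mu i 0)%:E)%E by rewrite lee_fin sumr_ge0.
have /lee_subr_add T_le_eta1 := sum_mu_T.
case: (boolP (S \subset T)) => ST.
  case: (boolP (T \subset S)) => TS.
    by have -> : S = T by apply/eqP; rewrite finset.eqEsubset ST TS.
  apply: le_trans T_le_eta1 _; apply: le_trans (leeDl _ sumS_ge0).
  by apply: eta1_lb; rewrite properE ST TS.
have [j jS jT] := subsetPn ST.
have /lte_subl_le_add eta1_le : (eta1 - eta2 < (mu j 0)%:E)%E.
  by rewrite (le_lt_trans _ (mu_notT jT)) // le_max lexx.
apply: le_trans T_le_eta1 (le_trans eta1_le _).
apply: leeD; first exact: eta2_lb.
by rewrite lee_fin (bigD1 j) //= lerDl sumr_ge0.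
Qed.

Lemma valS_add_sum_le_Xi_add_Psi y z :
  (valS T + (\sum_(i in T) mu i 0)%:E <= Xi y z + Psi_plus mu z)%E.
Proof.
case: (boolP [forall i, 0 <= z i 0]) => z_ge0; last first.
  by rewrite Psi_plus_not_nonneg // addey ?leey // -ltNye Xi_gtNy.
rewrite Psi_plus_nonneg //; apply: le_trans (valS_add_sum_le (supp z)) _.
by apply: leeD => //; apply: valS_le_Xi; exact: feasS_supp.
Qed.

End FaceValues.

Theorem mainTheorem18 (R : realType) (n m r : nat)
  (f : 'cV[R]_n -> \bar R) (g : 'cV[R]_m -> \bar R)
  (A : 'M[R]_(m, n)) (B : 'M[R]_(r, n)) (b : 'cV[R]_r)
  (mu mu' : 'cV[R]_r) (ys : 'cV[R]_m) (zs : 'cV[R]_r) :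
  proper_fun f -> lsc_fun f -> convex_fun f ->
  proper_fun g -> lsc_fun g -> convex_fun g ->
  (* x |-> f(x) + g(Ax) is bounded below *)
  (exists M : R, forall x, (M%:E <= f x + g (A *m x))%E) ->
  (* constraint qualification, ri omitted for polyhedral f or g *)
  (exists x : 'cV[R]_n,
     [/\ rel_int (edom f) x \/ (polyhedral_fun f /\ edom f x),
         rel_int (edom g) (A *m x) \/ (polyhedral_fun g /\ edom g (A *m x))
       & forall i, (B *m x) i 0 <= b i 0]) ->
  (forall i, 0 < mu i 0) ->
  (* w* = (ys, zs) is a local minimizer of Xi + Psi_{+,mu} *)
  (exists2 e : R, 0 < e & forall y z, near_vec ys y e -> near_vec zs z e ->
     (Xi f g A B b ys zs + Psi_plus mu zs <= Xi f g A B b y z + Psi_plus mu z)%E) ->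
  let T := supp zs in
  let Omega := [set w : 'cV[R]_m * 'cV[R]_r | feasS T w.2 /\
                 forall y z, feasS T z -> (Xi f g A B b w.1 w.2 <= Xi f g A B b y z)%E] in
  Omega (ys, zs) ->
  (forall w, Omega w -> (l0norm zs <= l0norm w.2)%N) ->
  let eta0 := valS f g A B b T in
  let eta1 := ereal_inf [set valS f g A B b S | S in [set S : {set 'I_r} | S \proper T]] in
  let eta2 := ereal_inf [set valS f g A B b S | S in [set S : {set 'I_r} | ~~ (S \subset T)]] in
  (forall i, 0 < mu' i 0) ->
  ((\sum_(i in T) mu' i 0)%:E <= eta1 - eta0)%E ->
  (forall j, j \notin T -> (maxe (eta1 - eta2) 0 < (mu' j 0)%:E)%E) ->
  forall y z,
    (Xi f g A B b ys zs + Psi_plus mu' zs <= Xi f g A B b y z + Psi_plus mu' z)%E.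
Proof.
move=> f_proper _ _ g_proper _ _ _ _ _ _ T Omega [zsT zs_min] _ eta0 eta1 eta2
  mu'_gt0 sum_mu'_T mu'_notT y z.
rewrite (Xi_argmin_valS zsT zs_min) Psi_plus_nonneg; last exact: feasS_nonneg zsT.
apply: (valS_add_sum_le_Xi_add_Psi f_proper g_proper _ _ _ sum_mu'_T mu'_notT).
- by move=> i; exact: ltW.
- by move=> S ST; apply: ereal_inf_lbound; exists S.
- by move=> S ST; apply: ereal_inf_lbound; exists S.
Qed.
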